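(* For any positive integers $r$ and $n$ with $\omega(n)\geq 2$ and $n\in F_r$, $\displaystyle P_1(n)<Q_1(n)\left(1-J_r+\frac{J_r}{r}Q_1(n)\right)$.
   Context: For a positive integer $r$, $S_r$ is the multiplicative arithmetic function with $S_r(p^{\alpha})=0$ if $p\leq r$ and $S_r(p^{\alpha})=p^{\alpha-1}(p-r)$ if $p>r$, for all primes $p$ and positive integers $\alpha$. $B_r=\{n\in\mathbb{N}: S_r(n)>0\}$ (positive integers whose smallest prime factor exceeds $r$, together with $1$). $F_r$ is the set of $n\in B_r$ such that $S_r(n)<S_r(m)$ for all $m\in B_r$ with $m>n$. $\omega(n)$ is the number of distinct prime factors of $n$. $P_1(n)$ is the largest prime divisor of $n$, and $Q_1(n)$ is the smallest prime that is larger than $r$ and does not divide $n$. $r\#$ is the product of all primes $\leq r$ (with $1\#=1$). The Jacobsthal function $J(m)$ is the smallest positive integer $a$ such that every set of $a$ consecutive integers contains an element coprime to $m$; $J_r=J(r\#)$. *)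

From mathcomp Require Import all_boot all_order all_algebra.
Set Implicit Arguments. Unset Strict Implicit. Unset Printing Implicit Defensive.
Import Order.TTheory GRing.Theory Num.Theory.

Definition S (r n : nat) : nat :=
  \prod_(p <- primes n) (if r < p then p ^ (logn p n).-1 * (p - r) else 0).

Definition inB (r n : nat) : bool := (0 < n) && (0 < S r n).

Definition inF (r n : nat) : Prop :=
  inB r n /\ (forall m : nat, inB r m -> n < m -> S r n < S r m).

Definition omega (n : nat) : nat := size (primes n).

Definition P1 (n : nat) : nat := max_pdiv n.

(* Q_1(n): smallest prime > r not dividing n (for n > 0; the n == 0 disjunct
   only serves to make the definition total). *)
Definition Q1_pred (r n : nat) : pred nat :=
  fun p => [&& prime p, r < p & (n == 0) || ~~ (p %| n)].

Lemma Q1_exists (r n : nat) : exists p, Q1_pred r n p.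
Proof.
case: (prime_above (r + n)) => p Hp pp; exists p.
rewrite /Q1_pred pp /=.
apply/andP; split; first by apply: leq_ltn_trans Hp; apply: leq_addr.
case: n Hp => [|n] Hp //=; apply/negP => /(dvdn_leq (ltn0Sn n)) H.
by move: (leq_trans Hp H); rewrite ltnNge leq_addl.
Qed.

Definition Q1 (r n : nat) : nat := ex_minn (Q1_exists r n).

Definition primorial (r : nat) : nat := \prod_(p < r.+1 | prime p) p.

Definition jac_ok (m a : nat) : Prop :=
  forall k : int, exists i : nat, (i < a)%N /\ coprimez (k + i%:Z)%R m%:Z.

Definition is_jacobsthal (m a : nat) : Prop :=
  (0 < a)%N /\ jac_ok m a /\ (forall b : nat, (0 < b)%N -> jac_ok m b -> (a <= b)%N).

From mathcomp Require Import all_boot all_order all_algebra.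
From mathcomp Require Import ring lra zify.
Import Order.TTheory GRing.Theory Num.Theory.

Set Implicit Arguments.
Unset Strict Implicit.
Unset Printing Implicit Defensive.

(* Suppose P_1(n) >= Q_1(n) (1 - J_r + (J_r / r) Q_1(n)) and write p = P_1(n),
   q = Q_1(n).  By the definition of J_r some k in (p/q, p/q + J_r] is coprime
   to r#, so m = (n/p) q k lies in B_r and exceeds n.  Comparing the products
   S_r(x) = x * prod_(l | x) (1 - r/l) gives S_r(m) (p - r) <= S_r(n) k (q - r),
   and the assumed inequality is exactly what makes k (q - r) <= p - r.  Hence
   S_r(m) <= S_r(n), contradicting n in F_r. *)

Lemma inBE r n : inB r n = (0 < n) && all (fun p => r < p) (primes n).
Proof.
rewrite /inB /S; case: (0 < n) => //=; apply/idP/allP => [Spos p pn | rp].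
  have := gt0_prodn_seq Spos p pn isT.
  by case: (ltnP r p) => // _; rewrite ltnn.
rewrite big_seq; apply: prodn_cond_gt0 => p /rp rp_lt.
by rewrite rp_lt muln_gt0 expn_gt0 subn_gt0 rp_lt (leq_ltn_trans (leq0n r) rp_lt).
Qed.

Lemma inB_primes_gt r n : inB r n -> {in primes n, forall p, r < p}.
Proof. by rewrite inBE => /andP [_ /allP]. Qed.

Lemma inB_mul r a b : inB r a -> inB r b -> inB r (a * b).
Proof.
rewrite !inBE => /andP [a0 /allP ra] /andP [b0 /allP rb].
rewrite muln_gt0 a0 b0; apply/allP => p.
by rewrite primesM // => /orP [/ra | /rb].
Qed.

Lemma inB_dvd r n d : 0 < d -> d %| n -> inB r n -> inB r d.
Proof.
rewrite !inBE => d0 dn /andP [n0 /allP rn]; rewrite d0; apply/allP => p.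
rewrite mem_primes => /and3P [pp _ pd]; apply: rn.
by rewrite mem_primes pp n0 (dvdn_trans pd dn).
Qed.

Lemma inB_prime r q : prime q -> r < q -> inB r q.
Proof. by move=> qp rq; rewrite inBE prime_gt0 // primes_prime //= rq. Qed.

Lemma prime_dvd_primorial r p : prime p -> p <= r -> p %| primorial r.
Proof.
move=> pp pr; have pr' : p < r.+1 by rewrite ltnS.
by rewrite /primorial (bigD1 (Ordinal pr')) //= dvdn_mulr.
Qed.

Lemma inB_coprime_primorial r k : 0 < k -> coprime k (primorial r) -> inB r k.
Proof.
rewrite inBE => k0 ck; rewrite k0; apply/allP => p.
rewrite mem_primes => /and3P [pp _ pk]; rewrite ltnNge; apply/negP => pr.
have : p %| gcdn k (primorial r) by rewrite dvdn_gcd pk prime_dvd_primorial.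
by rewrite (eqP ck) dvdn1 => /eqP p1; rewrite p1 in pp.
Qed.

Local Open Scope ring_scope.

(* [S_r(p^a) / p^a] for a prime [p > r]. *)
Definition Sratio (r p : nat) : rat := 1 - r%:R / p%:R.

Lemma Sratio_le1 r p : Sratio r p <= 1.
Proof. by rewrite /Sratio lerBlDr lerDl divr_ge0. Qed.

Lemma Sratio_ge0 r p : (r <= p)%N -> 0 <= Sratio r p.
Proof.
move=> rp; rewrite /Sratio subr_ge0.
case: (posnP p) => [p0 | p0]; first by rewrite p0 invr0 mulr0.
by rewrite ler_pdivrMr ?ltr0n // mul1r ler_nat.
Qed.

Lemma S_ratioE r n : inB r n ->
  (S r n)%:R = n%:R * \prod_(p <- primes n) Sratio r p :> rat.
Proof.
rewrite inBE => /andP [n0 /allP rn].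
rewrite {2}(prod_prime_decomp n0) prime_decompE big_map /= /S.
rewrite !natr_prod -big_split /= !big_seq; apply: eq_bigr => p pn.
have rp := rn p pn; have e0 : (0 < logn p n)%N by rewrite logn_gt0.
have p0 : p%:R != 0 :> rat by rewrite pnatr_eq0; lia.
rewrite rp natrM !natrX natrB ?(ltnW rp) // -{2}(prednK e0) exprS /Sratio.
by field.
Qed.

Lemma ler_prod_subset (R : numDomainType) (I : eqType) (s t : seq I)
    (F : I -> R) :
  uniq s -> uniq t -> {subset s <= t} ->
  (forall i, i \in t -> 0 <= F i <= 1) ->
  \prod_(i <- t) F i <= \prod_(i <- s) F i.
Proof.
move=> us ut st F01; rewrite (bigID (mem s)) /=.
have filter_s : perm_eq [seq i <- t | i \in s] s.
  apply: uniq_perm (filter_uniq _ ut) us _ => i.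
  by rewrite mem_filter andb_idr //; apply: st.
rewrite -big_filter (perm_big _ filter_s) /=.
apply: ler_piMr; rewrite big_seq_cond.
- by apply: prodr_ge0 => i /andP [/st /F01 /andP []].
- by apply: prodr_ile1 => i /andP [/F01].
Qed.

Lemma inB_swap r n p q k : prime p -> (p %| n)%N -> prime q -> (r < q)%N ->
  inB r k -> inB r n -> inB r (n %/ p * q * k).
Proof.
move=> pp pn qp rq Bk Bn; apply: inB_mul (inB_mul _ (inB_prime qp rq)) Bk.
have n0 : (0 < n)%N by case/andP: Bn.
apply: inB_dvd _ (dvdn_div pn) Bn.
rewrite divn_gt0 ?prime_gt0 //; exact: dvdn_leq.
Qed.

Lemma swap_primes_subset n p q k : prime p -> (p %| n)%N -> prime q ->
  (0 < n %/ p * q * k)%N ->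
  {subset q :: [seq l <- primes n | l != p] <= primes (n %/ p * q * k)}.
Proof.
move=> pp pn qp m0 l; rewrite inE mem_filter => /orP [/eqP -> | /andP [lp]].
  by rewrite mem_primes qp m0 dvdn_mulr // dvdn_mull.
rewrite !mem_primes m0 => /and3P [lpr _].
rewrite -{1}(divnK pn) Euclid_dvdM // (dvdn_prime2 lpr pp) (negbTE lp) orbF.
by rewrite lpr -mulnA; apply: dvdn_mulr.
Qed.

Lemma S_swap_le r n p q k : prime p -> (p %| n)%N -> prime q -> (r < q)%N ->
  ~~ (q %| n)%N -> inB r k -> inB r n ->
  (S r (n %/ p * q * k) * (p - r) <= S r n * (k * (q - r)))%N.
Proof.
move=> pp pn qp rq qn Bk Bn.
have n0 : (0 < n)%N by case/andP: Bn.
have pn' : p \in primes n by rewrite mem_primes pp n0.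
have rp : (r < p)%N := inB_primes_gt Bn pn'.
set G := \prod_(l <- primes n | l != p) Sratio r l.
set m := (n %/ p * q * k)%N.
have Bm : inB r m := inB_swap pp pn qp rq Bk Bn.
have Sn : (S r n)%:R = (n %/ p)%:R * (p - r)%:R * G :> rat.
  rewrite S_ratioE // (bigD1_seq p pn' (primes_uniq n)) /= -{1}(divnK pn).
  have p0 : p%:R != 0 :> rat by rewrite pnatr_eq0 -lt0n prime_gt0.
  by rewrite natrM natrB ?(ltnW rp) // /Sratio -/G; field.
have Sm : (S r m)%:R <= (n %/ p)%:R * (k%:R * (q - r)%:R) * G :> rat.
  have mq : m%:R * Sratio r q = (n %/ p)%:R * (k%:R * (q - r)%:R) :> rat.
    have q0 : q%:R != 0 :> rat by rewrite pnatr_eq0 -lt0n prime_gt0.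
    by rewrite /m !natrM natrB ?(ltnW rq) // /Sratio; field.
  have m0 : (0 < m)%N by case/andP: Bm.
  have sub := swap_primes_subset pp pn qp m0.
  have Sratio01 l : l \in primes m -> 0 <= Sratio r l <= 1.
    by move/(inB_primes_gt Bm)/ltnW/Sratio_ge0 => ->; rewrite Sratio_le1.
  have qn' : q \notin primes n by rewrite mem_primes qp n0.
  have us : uniq (q :: [seq l <- primes n | l != p]).
    by rewrite /= mem_filter (negbTE qn') andbF filter_uniq ?primes_uniq.
  rewrite S_ratioE // -mq.
  have := ler_wpM2l (ler0n _ m) (ler_prod_subset us (primes_uniq m) sub Sratio01).
  by rewrite big_cons big_filter -/G mulrA.
rewrite -(ler_nat rat) !natrM Sn.
apply: le_trans (ler_wpM2r (ler0n _ _) Sm) _.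
by rewrite le_eqVlt; apply/predU1P; left; ring.
Qed.

Lemma window_gain_le (R : realFieldType) (p q r d k J : R) :
  0 < r -> r < q -> d * q <= p -> k <= d + J -> 0 <= J ->
  q * (1 - J + J / r * q) <= p -> k * (q - r) <= p - r.
Proof.
move=> r0 rq dq kdJ J0 hyp.
have qr0 : 0 <= q - r by rewrite subr_ge0 ltW.
have q0 : 0 < q by apply: lt_trans rq.
have dqr : d * q * (q - r) <= p * (q - r) by apply: ler_wpM2r.
have Jqr : q * (J * (q - r) + r) <= p * r.
  have -> : q * (J * (q - r) + r) = q * (1 - J + J / r * q) * r.
    by field; apply: lt0r_neq0.
  exact: ler_wpM2r (ltW r0) _ _ hyp.
have : q * ((d + J) * (q - r) + r) <= q * p by nra.
rewrite ler_pM2l // => dJp.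
by apply: le_trans (ler_wpM2r qr0 kdJ) _; lra.
Qed.

Lemma jac_ok_window m a k : jac_ok m a -> exists2 i, (i < a)%N & coprime (k + i) m.
Proof.
by move=> /(_ (Posz k)) [i [ia cop]]; exists i.
Qed.

Lemma Q1_spec r n : (0 < n)%N ->
  [/\ prime (Q1 r n), (r < Q1 r n)%N & ~~ (Q1 r n %| n)%N].
Proof.
move=> n0; rewrite /Q1; case: ex_minnP => q /and3P [qp rq].
by rewrite gtn_eqF.
Qed.

Theorem lemma3p4 (r n J : nat) :
  (0 < r)%N -> (0 < n)%N -> (2 <= omega n)%N -> inF r n ->
  is_jacobsthal (primorial r) J ->
  ((P1 n)%:Q < (Q1 r n)%:Q * (1 - J%:Q + J%:Q / r%:Q * (Q1 r n)%:Q))%R.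
Proof.
move=> r0 n0 omega_n [Bn minS] [_ [Jok _]].
have n1 : (1 < n)%N by move: n0 omega_n; case: (n) => [|[]].
have [qp rq qn] := Q1_spec r n0.
set p := P1 n; set q := Q1 r n in qp rq qn *.
have pp : prime p := max_pdiv_prime n1.
have pn : (p %| n)%N := max_pdiv_dvd n.
have [i iJ cop] := jac_ok_window (p %/ q).+1 Jok.
set k := ((p %/ q).+1 + i)%N.
have Bk : inB r k by apply: inB_coprime_primorial.
have Bm := inB_swap pp pn qp rq Bk Bn.
have nm : (n < n %/ p * q * k)%N.
  have n'0 : (0 < n %/ p)%N by rewrite divn_gt0 ?prime_gt0 // dvdn_leq.
  rewrite -{1}(divnK pn) -mulnA ltn_pmul2l //.
  apply: leq_trans (ltn_ceil p (prime_gt0 qp)) _.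
  by rewrite mulnC leq_mul2l leq_addr orbT.
have rp : (r < p)%N by apply: (inB_primes_gt Bn); rewrite mem_primes pp n0.
rewrite -!pmulrn ltNge; apply/negP => big_p.
have gain : (k * (q - r) <= p - r)%N.
  rewrite -(ler_nat rat) natrM !natrB ?(ltnW rq) ?(ltnW rp) //.
  apply: (window_gain_le (d := (p %/ q)%:R) (J := J%:R)) big_p.
  - by rewrite ltr0n.
  - by rewrite ltr_nat.
  - by rewrite -natrM ler_nat leq_trunc_div.
  - by rewrite -natrD ler_nat /k; lia.
  - exact: ler0n.
have := leq_trans (S_swap_le pp pn qp rq qn Bk Bn) (leq_mul (leqnn _) gain).
by rewrite leq_pmul2r ?subn_gt0 // leqNgt minS.
Qed.
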